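(* Let $n\geqslant 3$, let $S$ be a caterpillar species tree with canonical label vector $(s_1,\dots,s_n)$, and let $k_s,k_\ell\in\{1,\dots,n\}$ with $k_s<k_\ell$ and $k_\ell\neq 2$. Let $G$ be the caterpillar gene tree obtained from $S$ by forward incrementation on positions $k_s,\dots,k_\ell$, i.e. with canonical label vector $(g_1,\dots,g_n)$ given by $g_{k_s}=s_{k_\ell}$, $g_k=s_{k-1}$ for $k_s<k\leqslant k_\ell$, and $g_k=s_k$ for $k\notin\{k_s,\dots,k_\ell\}$. Then the roadblock set $B_{G,S}$ consists of a triangle of lattice points on and below the diagonal, i.e. $B_{G,S}=\{(i,j): a\leqslant j\leqslant i\leqslant b\}$ for some integers $a\leqslant b$.
   Context: All trees are binary, rooted, leaf-labeled. A caterpillar tree with $n$ leaves is one in which some internal node is descended from all other internal nodes. Its canonical label vector $(x_1,\dots,x_n)$ has $x_1,x_2$ the labels of the two leaves of the cherry (unique internal node with two descendant leaves) and, for $3\leqslant i\leqslant n$, $x_i$ the label of the leaf separated from the root by $n-i+1$ edges; vectors differing only by swapping $x_1,x_2$ describe the same tree. For caterpillars $G,S$ with canonical vectors $\mathbf g,\mathbf s$, let $\sigma(x)$ be the index of label $x$ in $\mathbf s$, $F(j)=\max\{\sigma(g_1),\dots,\sigma(g_{j+1})\}-1$ for $1\leqslant j\leqslant n-1$, and define the roadblock set $B_{G,S}=\{(i,j)\in\mathbb Z^2:1\leqslant j\leqslant i\leqslant n-1,\ i<F(j)\}$. *)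

From mathcomp Require Import all_boot all_algebra.
Set Implicit Arguments. Unset Strict Implicit. Unset Printing Implicit Defensive.

(* Canonical label vectors are represented as sequences of labels:
   the 1-based entry x_k of a vector v is  nth x0 v k.-1  (x0 an arbitrary
   default, irrelevant for in-range indices). *)

Definition sigma (T : eqType) (s : seq T) (x : T) : nat := (index x s).+1.

Definition Fmap (T : eqType) (x0 : T) (s g : seq T) (j : nat) : nat :=
  (\max_(1 <= k < j.+2) sigma s (nth x0 g k.-1)) - 1.

Definition roadblock (T : eqType) (x0 : T) (n : nat) (s g : seq T)
    (i j : int) : bool :=
  [&& (1 <= j)%R, (j <= i)%R, (i <= (n.-1)%:Z)%R &
      (i < (Fmap x0 s g `|j|%N)%:Z)%R].

From mathcomp Require Import all_boot all_algebra.
From mathcomp Require Import zify.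

Set Implicit Arguments.
Unset Strict Implicit.
Unset Printing Implicit Defensive.

(* The gene label at position k is the species label at position
   forward_incr ks kl k, so the prefix maxima of sigma along g equal kl on
   [ks, kl] and are the identity elsewhere.  Hence F(j) = kl - 1 for
   ks - 1 <= j <= kl - 2 and F(j) = j otherwise: the condition j <= i < F(j)
   is void outside that window and reads i <= kl - 2 inside it, which gives
   the triangle max(1, ks - 1) <= j <= i <= kl - 2. *)

Definition forward_incr (ks kl k : nat) : nat :=
  if k == ks then kl else if ks < k <= kl then k.-1 else k.

Lemma sigma_nth (T : eqType) (x0 : T) (s : seq T) k :
  uniq s -> k < size s -> sigma s (nth x0 s k) = k.+1.
Proof. by move=> *; rewrite /sigma index_uniq. Qed.

Lemma max_forward_incr ks kl m : 1 <= ks < kl ->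
  \max_(1 <= k < m.+1) forward_incr ks kl k = if ks <= m <= kl then kl else m.
Proof.
move=> hk; elim: m => [|m IH]; first by rewrite big_geq //; case: ifP; lia.
rewrite big_nat_recr //= IH /forward_incr.
by repeat case: ifP => ?; lia.
Qed.

Lemma roadblock_triangle (T : eqType) (x0 : T) n (s g : seq T) a b :
  b.+2 <= n ->
  (forall j, 0 < j < n -> Fmap x0 s g j = if a <= j <= b then b.+1 else j) ->
  forall i j : int,
    roadblock x0 n s g i j = [&& (maxn 1 a)%:Z <= j, j <= i & i <= b%:Z]%R.
Proof.
move=> b_lt_n F_step [i|i] [j|j]; rewrite /roadblock /=; try lia.
have [j_ge_n | j_lt_n] := leqP n j; first lia.
have [-> | j_gt0] := posnP j; first lia.
by rewrite F_step ?j_gt0 //; case: ifP; lia.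
Qed.

Section ForwardIncrementation.

Variables (T : eqType) (x0 : T) (n ks kl : nat) (s g : seq T).
Hypotheses (size_s : size s = n) (uniq_s : uniq s).
Hypotheses (ks_gt0 : 0 < ks) (ks_lt_kl : ks < kl) (kl_le_n : kl <= n).
Hypothesis nth_g : forall k, 1 <= k <= n ->
  nth x0 g k.-1 =
    if k == ks then nth x0 s kl.-1
    else if ks < k <= kl then nth x0 s k.-2
    else nth x0 s k.-1.

Lemma sigma_forward_incr k : 1 <= k <= n ->
  sigma s (nth x0 g k.-1) = forward_incr ks kl k.
Proof.
move=> hk; rewrite nth_g // /forward_incr.
by repeat case: ifP => ?; rewrite sigma_nth ?size_s //; lia.
Qed.

Lemma Fmap_forward_incr j : j < n ->
  Fmap x0 s g j = if ks.-1 <= j <= kl.-2 then kl.-2.+1 else j.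
Proof.
move=> hj; rewrite /Fmap.
rewrite (eq_big_nat _ _ (F2 := forward_incr ks kl)) => [|k hk]; last first.
  by apply: sigma_forward_incr; lia.
by rewrite max_forward_incr; [do 2 case: ifP => ?; lia | lia].
Qed.

End ForwardIncrementation.

Theorem proposition8 (T : eqType) (x0 : T) (n : nat) (s g : seq T)
    (ks kl : nat) :
  3 <= n ->
  size s = n -> uniq s ->
  1 <= ks -> ks < kl -> kl <= n -> kl != 2 ->
  size g = n ->
  (forall k, 1 <= k <= n ->
     nth x0 g k.-1 =
       if k == ks then nth x0 s kl.-1
       else if ks < k <= kl then nth x0 s k.-2
       else nth x0 s k.-1) ->
  exists a b : int, (a <= b)%R /\
    forall i j : int,
      roadblock x0 n s g i j = [&& (a <= j)%R, (j <= i)%R & (i <= b)%R].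
Proof.
move=> _ size_s uniq_s ks_gt0 ks_lt_kl kl_le_n kl_neq2 _ nth_g.
exists (Posz (maxn 1 ks.-1)), (Posz kl.-2); split; first lia.
apply: roadblock_triangle; first lia.
move=> j /andP[_ j_lt_n].
exact: Fmap_forward_incr size_s uniq_s ks_gt0 ks_lt_kl kl_le_n nth_g j j_lt_n.
Qed.
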